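(* For all $i,j\in[K]$ and $0<\epsilon<2$, $$\eta_{i,j}(\epsilon)\le \log\Big(\frac{2}{\epsilon}\Big)+1+\log\big(1+D_{f_1}(\mathrm{P}_i\Vert \mathrm{P}_j)\big).$$ Furthermore, if $\epsilon\le 1$, then $$\eta_{i,j}(\epsilon)\le 2\log\Big(\frac{2}{\epsilon}\Big)\Big[1+\log\big(1+D_{f_1}(\mathrm{P}_i\Vert \mathrm{P}_j)\big)\Big].$$
   Context: Setting: $\mathcal{G}$ is a causal directed acyclic graph viewed as a Bayesian network (the joint law factorizes as the product over nodes $X$ of $\mathrm{P}(X\mid pa(X))$). $V$ is a node with parent set $pa(V)$; $V$ and $pa(V)$ take values in finite sets. There are $K$ arms indexed by $[K]=\{0,\dots,K-1\}$: under arm $k$ the conditional law of $V$ given $pa(V)$ is a known conditional distribution $\mathrm{P}_k(V\mid pa(V))$ while all other conditionals (hence the marginal law of $pa(V)$) are unchanged; these conditionals are mutually absolutely continuous. $\mathbb{P}_k,\mathbb{E}_k$ denote probability/expectation under the joint law induced by arm $k$. Logarithms are natural. Conditional $f$-divergence: for a convex $f\ge 0$ with $f(1)=0$, $D_f(\mathrm{P}_i\Vert\mathrm{P}_j)=\mathbb{E}_j\big[f\big(\mathrm{P}_i(V\mid pa(V))/\mathrm{P}_j(V\mid pa(V))\big)\big]$. Here $f_1(x)=x\exp(x-1)-1$. For $0<\epsilon<2$: $\eta_{i,j}(\epsilon)=\min\{\eta\in\mathbb{R}:\ \mathbb{P}_i(\mathrm{P}_i(V\mid pa(V))/\mathrm{P}_j(V\mid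 pa(V))>\eta)\le \epsilon/2\}$. *)

From mathcomp Require Import all_boot all_order all_algebra.
From mathcomp Require Import all_classical all_reals.
From mathcomp Require Import sequences exp.

Set Implicit Arguments.
Unset Strict Implicit.
Unset Printing Implicit Defensive.
Import Order.TTheory GRing.Theory Num.Theory.
Local Open Scope ring_scope.
Local Open Scope classical_set_scope.

(* Finite setting: [Pa] = values of pa(V), [Vt] = values of V.
   [q] = marginal law of pa(V) (the same under every arm).
   [P k p v] = P_k(V = v | pa(V) = p). *)

Section Defs.
Variables (R : realType) (Pa Vt : finType) (K : nat).
Variables (q : Pa -> R) (P : 'I_K -> Pa -> Vt -> R).

Definition lratio (i j : 'I_K) (p : Pa) (v : Vt) : R := P i p v / P j p v.

Definition expect (k : 'I_K) (g : Pa -> Vt -> R) : R :=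
  \sum_(p : Pa) \sum_(v : Vt) q p * P k p v * g p v.

Definition prob (k : 'I_K) (E : Pa -> Vt -> bool) : R :=
  expect k (fun p v => if E p v then 1 else 0).

Definition f1 (x : R) : R := x * expR (x - 1) - 1.

Definition cond_fdiv (f : R -> R) (i j : 'I_K) : R :=
  expect j (fun p v => f (lratio i j p v)).

(* eta_{i,j}(eps) = min { eta : P_i(P_i/P_j > eta) <= eps/2 }
   (the minimum exists; it coincides with the infimum) *)
Definition eta (i j : 'I_K) (eps : R) : R :=
  inf [set e : R | prob i (fun p v => e < lratio i j p v) <= eps / 2].

End Defs.

From mathcomp Require Import all_boot all_order all_algebra.
From mathcomp Require Import all_classical all_reals.
From mathcomp Require Import sequences exp.
From mathcomp Require Import topology normedtype.
From mathcomp Require Import ring lra zify.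
Import Order.TTheory GRing.Theory Num.Theory.
Local Open Scope ring_scope.

Set Implicit Arguments.
Unset Strict Implicit.
Unset Printing Implicit Defensive.

(* Under arm j the likelihood ratio r = P_i / P_j has mean 1, and
   P_i(r > B) = E_j[r 1{r > B}], 1 + D_f1(P_i || P_j) = E_j[r e^(r-1)].
   On {r > B} we have r e^(r-1) >= e^(B-1) r, so Markov's inequality gives
   P_i(r > B) <= (1 + D) e^(1-B), which is the first bound.  For the second,
   x e^(x-1) is bounded off the tail by its tangent line at x = 1/2 instead
   of by 0; the constant (5/4) e^(-1/2) gained this way pays for the smaller
   threshold 2 ln(2/eps) (1 + ln(1 + D)) when eps <= 1, through an elementary
   inequality that needs e <= 2.72 and ln 2 >= 0.68. *)

Section exp_ln_bounds.
Variable R : realType.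

Lemma series_exp_coeff1_le n : (6 <= n)%N ->
  series (exp_coeff (1 : R)) n + 2 / n`!%:R <= 68 / 25.
Proof.
elim: n => // n IHn; rewrite leq_eqVlt => /orP[/eqP <- | n_ge6].
  rewrite /series /= !big_nat_recr //= big_nil /exp_coeff /= !expr1n.
  by rewrite !factS fact0 !natrM; lra.
apply: le_trans (IHn n_ge6); rewrite seriesSr /exp_coeff /= expr1n -addrA lerD2l.
have fact_gt0 : (0 : R) < n`!%:R by rewrite ltr0n fact_gt0.
have : 2 / n.+1`!%:R <= 1 / (n`!%:R : R).
  rewrite factS natrM invfM mulrA ler_pM2r ?invr_gt0 //.
  by rewrite ler_pdivrMr ?ltr0n // mul1r ler_nat; lia.
lra.
Qed.

Lemma expR1_le : expR (1 : R) <= 68 / 25.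
Proof.
apply: limr_le; first exact: is_cvg_series_exp_coeff.
near=> n; have n_ge6 : (6 <= n)%N by near: n; exists 6%N.
apply: le_trans (series_exp_coeff1_le n_ge6).
by rewrite lerDl divr_ge0 // ler0n.
Unshelve. all: by end_near.
Qed.

Lemma ln2_ge : 17 / 25 <= ln (2 : R).
Proof.
rewrite -ler_expR lnK ?posrE //.
rewrite -(@ler_pXn2r _ 25) ?nnegrE ?expR_ge0 // -expRM_natl.
rewrite (_ : 25%:R * (17 / 25) = 17%:R * 1); last by lra.
rewrite expRM_natl; apply: (@le_trans _ _ ((68 / 25) ^+ 17)).
  by apply: lerXn2r; rewrite ?nnegrE ?expR_ge0 ?expR1_le //; lra.
rewrite expr_div_n ler_pdivrMr ?exprn_gt0 // -!natrX -natrM ler_nat; lia.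
Qed.

Lemma expR_Nhalf_bounds : 3 / 5 < expR (- (1 / 2) : R) <= 2 / 3.
Proof.
have h_gt0 := expR_gt0 (- (1 / 2) : R).
have sqr_h : expR (- (1 / 2)) * expR (- (1 / 2)) * expR 1 = 1 :> R.
  by rewrite -!expRD (_ : _ + _ = 0) ?expR0 //; lra.
have inv_h : expR (- (1 / 2)) * expR (1 / 2) = 1 :> R.
  by rewrite -expRD (_ : _ + _ = 0) ?expR0 //; lra.
have e_le := expR1_le; have half_le := expR_ge1Dx (1 / 2 : R).
by apply/andP; split; nra.
Qed.

Lemma expR_add_le_scale_expR (a L M : R) :
  0 <= M -> 1 / 2 <= L -> 1 <= 2 * a * L -> expR M + a - 1 <= a * expR (2 * L * M).
Proof.
move=> M_ge0 L_ge aL_ge1.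
have a_gt0 : 0 < a by nra.
have eM_ge1 : 1 <= expR M by rewrite -expR0 ler_expR.
have linearized : expR M * (a + a * (2 * L - 1) * M) <= a * expR (2 * L * M).
  rewrite (_ : 2 * L * M = M + (2 * L - 1) * M); last by ring.
  rewrite expRD mulrCA ler_pM2l ?expR_gt0 // -mulrA -[X in X + _]mulr1 -mulrDr.
  by rewrite ler_pM2l // expR_ge1Dx.
have [a_ge1 | a_lt1] := leP 1 a.
  have : 0 <= a * (2 * L - 1) * M by rewrite !mulr_ge0 //; lra.
  nra.
have eM_1M : expR M * (1 - M) <= 1.
  by have := expR_ge1Dx (- M); rewrite -(ler_pM2l (expR_gt0 M)) expRxMexpNx_1.
have : expR M * ((1 - a) * M) <= expR M * (a * (2 * L - 1) * M).
  by rewrite ler_pM2l ?expR_gt0 // ler_wpM2r //; lra.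
have : 0 <= (1 - a) * (1 - expR M * (1 - M)) by rewrite mulr_ge0 //; lra.
nra.
Qed.

Lemma tangent_half_le (x : R) : 0 <= x ->
  expR (- (1 / 2)) * (3 / 2 * x - 1 / 4) <= x * expR (x - 1).
Proof.
move=> x_ge0.
rewrite (_ : x - 1 = - (1 / 2) + (x - 1 / 2)); last by lra.
rewrite expRD mulrCA ler_pM2l ?expR_gt0 //.
have : x + 1 / 2 <= expR (x - 1 / 2) by have := expR_ge1Dx (x - 1 / 2); lra.
have := sqr_ge0 (x - 1 / 2); rewrite expr2; nra.
Qed.

(* With X := expR (B - 1) for the threshold B := 2 ln u (1 + ln c) and
   h := expR (- (1 / 2)), this turns (X - 3h/2) t + 5h/4 <= c into u t < 1
   once X > 3h/2. *)
Lemma refined_threshold_ineq (u c : R) : 2 <= u -> 1 <= c ->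
  u * c < expR (2 * ln u * (1 + ln c) - 1) + expR (- (1 / 2)) * (5 / 4 * u - 3 / 2).
Proof.
move=> u_ge2 c_ge1.
have u_gt0 : 0 < u by lra.
have L_ge : 17 / 25 <= ln u.
  by apply: le_trans ln2_ge _; rewrite ler_ln ?posrE //; lra.
have e_gt0 := expR_gt0 (1 : R); have e_le := expR1_le.
have /andP[h_gt _] := expR_Nhalf_bounds.
have M_ge0 : 0 <= ln c by exact: ln_ge0.
have c_eq : expR (ln c) = c by rewrite lnK // posrE; lra.
set L := ln u in L_ge *; set M := ln c in M_ge0 c_eq *.
set e := expR 1 in e_gt0 e_le *; set h := expR _ in h_gt *.
have a_ge : 25 / 34 <= u / e.
  by rewrite ler_pdivlMr //; nra.
have gap : c + u / e - 1 <= u / e * expR (2 * L * M).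
  rewrite -c_eq; apply: expR_add_le_scale_expR => //; first lra.
  (* tight at u = 2, since 4 * 17/25 = 68/25 *)
  by rewrite mulrA mulrAC ler_pdivlMr // mul1r; nra.
have -> : expR (2 * L * (1 + M) - 1) = u * (u / e * expR (2 * L * M)).
  rewrite (_ : 2 * L * (1 + M) - 1 = L + (L + 2 * L * M - 1)); last by ring.
  by rewrite expRD expRB expRD lnK ?posrE // mulrAC.
nra.
Qed.

End exp_ln_bounds.

Section arm_expectations.
Variables (R : realType) (Pa Vt : finType) (K : nat).
Variables (q : Pa -> R) (P : 'I_K -> Pa -> Vt -> R).
Hypothesis q_ge0 : forall p, 0 <= q p.
Hypothesis q_sum1 : \sum_(p : Pa) q p = 1.
Hypothesis P_ge0 : forall k p v, 0 <= P k p v.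
Hypothesis P_sum1 : forall k p, \sum_(v : Vt) P k p v = 1.
Hypothesis P_ac : forall k l p v, P k p v = 0 -> P l p v = 0.

Local Notation E := (expect q P).

Lemma le_expect k (f g : Pa -> Vt -> R) :
  (forall p v, f p v <= g p v) -> E k f <= E k g.
Proof.
move=> le_fg; apply: ler_sum => p _; apply: ler_sum => v _.
by rewrite ler_wpM2l ?mulr_ge0.
Qed.

Lemma expectD k (f g : Pa -> Vt -> R) :
  E k (fun p v => f p v + g p v) = E k f + E k g.
Proof.
rewrite /expect -big_split; apply: eq_bigr => p _.
by rewrite -big_split; apply: eq_bigr => v _; rewrite mulrDr.
Qed.

Lemma expectZ k a (f : Pa -> Vt -> R) :
  E k (fun p v => a * f p v) = a * E k f.
Proof.
rewrite /expect mulr_sumr; apply: eq_bigr => p _.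
by rewrite mulr_sumr; apply: eq_bigr => v _; rewrite mulrCA.
Qed.

Lemma expect_cst k a : E k (fun _ _ => a) = a.
Proof.
rewrite /expect -[RHS]mul1r -q_sum1 mulr_suml; apply: eq_bigr => p _.
by rewrite -mulr_suml -mulr_sumr P_sum1 mulr1.
Qed.

Lemma expect_lratio i j (g : Pa -> Vt -> R) :
  E i g = E j (fun p v => lratio P i j p v * g p v).
Proof.
apply: eq_bigr => p _; apply: eq_bigr => v _; rewrite /lratio.
have [Pj0 | Pj_neq0] := eqVneq (P j p v) 0.
  by rewrite Pj0 (P_ac i Pj0) !(mulr0, mul0r).
by field.
Qed.

Lemma expect_lratio1 i j : E j (lratio P i j) = 1.
Proof.
rewrite -(expect_cst i 1) [RHS](expect_lratio i j).
by apply: eq_bigr => p _; apply: eq_bigr => v _; rewrite mulr1.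
Qed.

Variables i j : 'I_K.
Local Notation r := (lratio P i j).
Local Notation D := (cond_fdiv q P (@f1 R) i j).

Lemma lratio_ge0 p v : 0 <= r p v.
Proof. by rewrite divr_ge0. Qed.

Lemma one_add_cond_fdiv_f1 : 1 + D = E j (fun p v => r p v * expR (r p v - 1)).
Proof. by rewrite /cond_fdiv /f1 expectD expect_cst; ring. Qed.

Lemma cond_fdiv_f1_ge0 : 0 <= D.
Proof.
rewrite (_ : 0 = E j (fun p v => 2 * r p v + - 2)).
  apply: le_expect => p v; rewrite /f1.
  have r_ge0 := lratio_ge0 p v.
  have : r p v <= expR (r p v - 1) by have := expR_ge1Dx (r p v - 1); lra.
  have := sqr_ge0 (r p v - 1); rewrite expr2; nra.
by rewrite expectD expectZ expect_lratio1 expect_cst; lra.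
Qed.

Lemma tail_lratio_le (a b B : R) : b <= 0 ->
  (forall x, 0 <= x -> a * x + b <= x * expR (x - 1)) ->
  (expR (B - 1) - a) * prob q P i (fun p v => B < r p v) + a + b <= 1 + D.
Proof.
move=> b_le0 minorant.
pose ind p v : R := if B < r p v then 1 else 0.
have -> : (expR (B - 1) - a) * prob q P i (fun p v => B < r p v) + a + b =
    E j (fun p v => (expR (B - 1) - a) * (r p v * ind p v) + a * r p v + b).
  by rewrite !expectD !expectZ expect_lratio1 expect_cst /prob (expect_lratio i j) mulr1.
rewrite one_add_cond_fdiv_f1; apply: le_expect => p v.
have r_ge0 := lratio_ge0 p v.
rewrite /ind; case: ltP => [B_lt_r | _]; last by rewrite !mulr0 add0r minorant.
have : r p v * expR (B - 1) <= r p v * expR (r p v - 1).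
  by rewrite ler_wpM2l // ler_expR lerD2r ltW.
rewrite mulr1; nra.
Qed.

Lemma eta_le eps B : 0 < eps < 2 ->
  2 / eps * prob q P i (fun p v => B < r p v) <= 1 -> eta q P i j eps <= B.
Proof.
move=> /andP[eps_gt0 eps_lt2] scaled_tail_le; apply: ge_inf.
  exists 0 => e /= tail_e_le; rewrite leNgt; apply/negP => e_lt0.
  move: tail_e_le; rewrite /prob (_ : (fun p v => _) = fun _ _ => 1).
    by rewrite expect_cst; lra.
  by apply/funext => p; apply/funext => v; rewrite (lt_le_trans e_lt0 (lratio_ge0 p v)).
rewrite /= ler_pdivlMr // mulrC.
by move: scaled_tail_le; rewrite mulrAC ler_pdivrMr // mul1r.
Qed.

Lemma eta_le_markov eps : 0 < eps < 2 ->
  eta q P i j eps <= ln (2 / eps) + 1 + ln (1 + D).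
Proof.
move=> /andP[eps_gt0 eps_lt2]; apply: eta_le; first by rewrite eps_gt0.
set u := 2 / eps; set B := _ + _ + _.
have D1_gt0 : 0 < 1 + D by have := cond_fdiv_f1_ge0; lra.
have nonneg_minorant (x : R) : 0 <= x -> 0 * x + 0 <= x * expR (x - 1).
  by move=> x_ge0; rewrite mul0r addr0 mulr_ge0 ?expR_ge0.
have := tail_lratio_le B (lexx 0) nonneg_minorant.
have -> : expR (B - 1) = u * (1 + D).
  rewrite (_ : B - 1 = ln u + ln (1 + D)); last by rewrite /B; lra.
  by rewrite expRD !lnK ?posrE ?divr_gt0.
by rewrite subr0 !addr0 mulrAC -[X in _ <= X -> _]mul1r ler_pM2r.
Qed.

Lemma eta_le_refined eps : 0 < eps <= 1 ->
  eta q P i j eps <= 2 * ln (2 / eps) * (1 + ln (1 + D)).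
Proof.
move=> /andP[eps_gt0 eps_le1]; apply: eta_le; first by rewrite eps_gt0; lra.
set u := 2 / eps; set B := _ * _ * _; set t := prob _ _ _ _.
have u_ge2 : 2 <= u by rewrite ler_pdivlMr //; lra.
have D_ge0 := cond_fdiv_f1_ge0.
have /andP[_ h_le] := expR_Nhalf_bounds R.
set h := expR (- (1 / 2)) in h_le *.
have tangent_minorant (x : R) : 0 <= x -> 3 / 2 * h * x + - (h / 4) <= x * expR (x - 1).
  by move=> /tangent_half_le; rewrite -/h; lra.
have h_quarter : - (h / 4) <= 0 by rewrite oppr_le0 divr_ge0 ?expR_ge0.
have tail := tail_lratio_le B h_quarter tangent_minorant; rewrite -/t in tail.
have threshold : u * (1 + D) < expR (B - 1) + h * (5 / 4 * u - 3 / 2).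
  by apply: refined_threshold_ineq; rewrite // lerDl.
have X_gt : 3 / 2 * h < expR (B - 1).
  have L_ge : 17 / 25 <= ln u.
    by apply: le_trans (ln2_ge R) _; rewrite ler_ln ?posrE //; lra.
  have : 0 <= ln (1 + D) by rewrite ln_ge0 //; lra.
  have := expR_ge1Dx (B - 1); rewrite /B; nra.
have : (expR (B - 1) - 3 / 2 * h) * (u * t - 1) < 0 by nra.
by rewrite pmulr_rlt0 ?subr_gt0 // subr_lt0 => /ltW.
Qed.

End arm_expectations.

Theorem lemma2 (R : realType) (Pa Vt : finType) (K : nat)
  (q : Pa -> R) (P : 'I_K -> Pa -> Vt -> R)
  (q_ge0 : forall p, 0 <= q p)
  (q_sum1 : \sum_(p : Pa) q p = 1)
  (P_ge0 : forall k p v, 0 <= P k p v)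
  (P_sum1 : forall k p, \sum_(v : Vt) P k p v = 1)
  (P_ac : forall k l p v, P k p v = 0 -> P l p v = 0)
  (i j : 'I_K) (eps : R) (eps_gt0 : 0 < eps) (eps_lt2 : eps < 2) :
  eta q P i j eps <=
    ln (2 / eps) + 1 + ln (1 + cond_fdiv q P (@f1 R) i j)
  /\
  (eps <= 1 ->
   eta q P i j eps <=
     2 * ln (2 / eps) * (1 + ln (1 + cond_fdiv q P (@f1 R) i j))).
Proof.
split => [|eps_le1].
  by apply: (eta_le_markov q_ge0 q_sum1 P_ge0 P_sum1 P_ac); rewrite eps_gt0.
by apply: (eta_le_refined q_ge0 q_sum1 P_ge0 P_sum1 P_ac); rewrite eps_gt0.
Qed.
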